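(* Let $\tau$ be any substitution whose ll and rl graphs are subfixed. Then \[\mathcal{L}_2(\tau)=\{u\in\mathcal{A}^2 : \exists a\in\mathcal{A},\ u \text{ is a factor of } \tau(a)\}\cup\{u\in\mathcal{A}^2 : \exists a\in\mathcal{A},\ u \text{ is a factor of } \tau^2(a)\}.\]
   Context: Let $\mathcal{A}$ be a finite nonempty alphabet, $\mathcal{A}^2$ the set of words of length $2$. A word $u$ is a factor of $v$ if $v=w_1uw_2$ for some words $w_1,w_2$. A substitution is a map $\tau:\mathcal{A}\to\mathcal{A}^+$ (nonempty words), extended to a concatenation-respecting map on words. The language $\mathcal{L}(\tau)$ is the set of words that are factors of $\tau^n(a)$ for some letter $a$ and some $n\ge1$, and $\mathcal{L}_2(\tau)$ is its set of words of length $2$. The ll graph (resp. rl graph) is the directed graph on vertex set $\mathcal{A}$ with exactly one edge from each letter $a$ to the leftmost (resp. rightmost) letter of $\tau(a)$. Such a graph is subfixed if for every vertex $x$, either the edge leaving $x$ goes to $x$, or it goes to a vertex $y$ whose outgoing edge goes to $y$ itself. *)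

From mathcomp Require Import all_boot.
Set Implicit Arguments. Unset Strict Implicit. Unset Printing Implicit Defensive.

(* A substitution on the alphabet A is a map tau : A -> seq A whose images
   are nonempty (hypothesis stated separately); extended to words by
   concatenation. *)
Definition subst_word (A : Type) (tau : A -> seq A) (w : seq A) : seq A :=
  flatten (map tau w).

Definition subst_iter (A : Type) (tau : A -> seq A) (n : nat) (w : seq A) :=
  iter n (subst_word tau) w.

Definition factor (A : eqType) (u v : seq A) : bool := infix u v.

Definition in_lang (A : eqType) (tau : A -> seq A) (u : seq A) : Prop :=
  exists (a : A) (n : nat), 1 <= n /\ factor u (subst_iter tau n [:: a]).

Definition in_lang2 (A : eqType) (tau : A -> seq A) (u : seq A) : Prop :=
  size u = 2 /\ in_lang tau u.

(* ll / rl graphs: edge a -> leftmost / rightmost letter of tau a *)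
Definition ll_edge (A : Type) (tau : A -> seq A) (a : A) : A := head a (tau a).
Definition rl_edge (A : Type) (tau : A -> seq A) (a : A) : A := last a (tau a).

Definition subfixed (A : eqType) (f : A -> A) : Prop :=
  forall x : A, f x = x \/ f (f x) = f x.

From mathcomp Require Import all_boot.
Set Implicit Arguments.
Unset Strict Implicit.
Unset Printing Implicit Defensive.

(* A length-2 factor [p; q] of tau(w) either lies inside some tau(c) or
   straddles the images of two adjacent letters c d of w, and then
   p = rl(c), q = ll(d). Inducting on n, a straddling factor of tau^n(a)
   comes from a factor [c; d] of tau^(n-1)(a), which lies inside some tau(b)
   or is itself (rl(c'), ll(d')) for a factor [c'; d'] of some tau(b).
   Subfixedness makes rl and ll idempotent, so in both cases [p; q] is the
   straddling factor (rl(c), ll(d)) of tau^2(b) for a factor [c; d] of tau(b). *)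

Lemma subfixed_idem (A : eqType) (f : A -> A) x : subfixed f -> f (f x) = f x.
Proof. by move=> /(_ x) [fx_x|//]; rewrite !fx_x. Qed.

Lemma infix2_cat (A : eqType) (p q : A) (s1 s2 : seq A) :
  infix [:: p; q] (s1 ++ s2) ->
  [\/ infix [:: p; q] s1, infix [:: p; q] s2
    | exists l r, s1 = rcons l p /\ s2 = q :: r].
Proof.
move=> /infixP [l [r]]; elim: l s1 => [|x l IH] [|y s1].
- by move=> /= ->; apply: Or32; apply/infixP; exists [::], r.
- case=> -> {y}; case: s1 => [|z s1].
    by move=> /= ->; apply: Or33; exists [::], r.
  by case=> -> _; apply: Or31; apply/infixP; exists [::], s1.
- by move=> /= ->; apply: Or32; apply/infixP; exists (x :: l), r.
- case=> -> /IH [/infixP [l1 [r1 ->]] | | [l1 [r1 [-> ->]]]].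
  + by apply: Or31; apply/infixP; exists (x :: l1), r1.
  + by apply: Or32.
  + by apply: Or33; exists (x :: l1), r1.
Qed.

Section SubstFactors.
Variables (A : eqType) (tau : A -> seq A).
Hypothesis tau_ne : forall a, tau a != [::].
Implicit Types (a b c d p q : A) (w : seq A).

Lemma subst_word_cons a w : subst_word tau (a :: w) = tau a ++ subst_word tau w.
Proof. by []. Qed.

Lemma subst_word_cat w1 w2 :
  subst_word tau (w1 ++ w2) = subst_word tau w1 ++ subst_word tau w2.
Proof. by rewrite /subst_word map_cat flatten_cat. Qed.

Lemma subst_word1 a : subst_word tau [:: a] = tau a.
Proof. exact: cats0. Qed.

Lemma infix2_subst_word p q w : infix [:: p; q] (subst_word tau w) ->
  (exists2 c, c \in w & infix [:: p; q] (tau c)) \/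
  exists c d, [/\ infix [:: c; d] w, p = rl_edge tau c & q = ll_edge tau d].
Proof.
elim: w => [|x w IH] //; rewrite subst_word_cons => /infix2_cat [pq_x|pq_w|].
- by left; exists x; rewrite ?mem_head.
- case/IH: pq_w => [[c c_w pq_c] | [c [d [cd_w -> ->]]]].
    by left; exists c; rewrite // in_cons c_w orbT.
  by right; exists c, d; rewrite infix_consl cd_w orbT.
- case=> l [r [tau_x]]; case: w {IH} => [|y w]; first by rewrite /subst_word.
  rewrite subst_word_cons => tau_y_r; right; exists x, y; split.
  + by apply/infixP; exists [::], w.
  + by rewrite /rl_edge tau_x last_rcons.
  + by move: tau_y_r (tau_ne y); rewrite /ll_edge; case: (tau y) => //= z s [->].
Qed.

Lemma infix2_subst_word_edges c d w : infix [:: c; d] w ->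
  infix [:: rl_edge tau c; ll_edge tau d] (subst_word tau w).
Proof.
move=> /infixP [l [r ->]]; rewrite subst_word_cat !subst_word_cons.
rewrite /rl_edge /ll_edge.
case: (tau c) (tau_ne c) => [|x s] // _; case: (tau d) (tau_ne d) => [|y t] // _.
rewrite /= -cat_cons [x :: s]lastI cat_rcons.
by apply/infixP; exists (subst_word tau l ++ belast x s), (t ++ subst_word tau r);
  rewrite -catA.
Qed.

Hypotheses (ll_sub : subfixed (ll_edge tau)) (rl_sub : subfixed (rl_edge tau)).

Lemma infix2_subst_iter n a p q :
  infix [:: p; q] (subst_iter tau n.+1 [:: a]) ->
  (exists b, infix [:: p; q] (tau b)) \/
  exists b c d,
    [/\ infix [:: c; d] (tau b), p = rl_edge tau c & q = ll_edge tau d].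
Proof.
elim: n p q => [|n IH] p q.
  by rewrite /subst_iter /= subst_word1; left; exists a.
case/infix2_subst_word => [[c _ pq_c] | [c [d [/IH cd_iter -> ->]]]].
  by left; exists c.
right; case: cd_iter => [[b cd_b] | [b [c' [d' [cd_b -> ->]]]]].
  by exists b, c, d.
by exists b, c', d'; rewrite !subfixed_idem.
Qed.

End SubstFactors.

Theorem mainTheorem11 (A : finType) (tau : A -> seq A) :
  0 < #|A| ->
  (forall a : A, tau a != [::]) ->
  subfixed (ll_edge tau) ->
  subfixed (rl_edge tau) ->
  forall u : seq A,
    in_lang2 tau u <->
    (size u = 2 /\
     ((exists a : A, factor u (tau a)) \/
      (exists a : A, factor u (subst_iter tau 2 [:: a])))).
Proof.
move=> _ tau_ne ll_sub rl_sub u; split.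
- case=> size_u [a [[|n] [//= _ u_iter]]]; split=> //.
  case: u size_u u_iter => [|p [|q []]] // _.
  case/(infix2_subst_iter tau_ne ll_sub rl_sub)
    => [[b pq_b] | [b [c [d [cd_b -> ->]]]]].
    by left; exists b.
  right; exists b; rewrite /factor /subst_iter /= subst_word1.
  exact: infix2_subst_word_edges.
- case=> size_u [[a u_a] | [a u_a]]; split=> //; exists a.
    by exists 1; rewrite /factor /subst_iter /= subst_word1.
  by exists 2.
Qed.
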